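(* Let $\alpha>0$, $\beta,\eta,\kappa\in\mathbb{R}$, $\rho>0$, $p\geq 1$ and $q$ with $\frac1p+\frac1q=1$, and $0\le a<x$. Let $f,g$ be two positive functions on $[0,\infty)$ with $f,g\in X^{p}_{c}(a,x)$ (for some $c\in\mathbb{R}$), such that ${}^{\rho}\mathcal{I}^{\alpha,\beta}_{a+,\eta,\kappa}f(x)<\infty$ and ${}^{\rho}\mathcal{I}^{\alpha,\beta}_{a+,\eta,\kappa}g(x)<\infty$. If there are real numbers $m,M>0$ with $0<m\leq \frac{f(t)}{g(t)}\leq M$ for all $t\in[a,x]$, then $$\left({}^{\rho}\mathcal{I}^{\alpha,\beta}_{a+,\eta,\kappa}f(x)\right)^{1/p}\left({}^{\rho}\mathcal{I}^{\alpha,\beta}_{a+,\eta,\kappa}g(x)\right)^{1/q}\leq\left(\frac{M}{m}\right)^{\frac{1}{pq}}\,{}^{\rho}\mathcal{I}^{\alpha,\beta}_{a+,\eta,\kappa}\big(f^{1/p}g^{1/q}\big)(x).$$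
   Context: For $c\in\mathbb{R}$ and $1\le p<\infty$, $X^{p}_{c}(a,b)$ denotes the space of Lebesgue measurable functions $f$ on $(a,b)$ with $\left(\int_a^b |t^{c}f(t)|^{p}\,\frac{dt}{t}\right)^{1/p}<\infty$. For $\alpha>0$, $\beta,\eta,\kappa\in\mathbb{R}$, $\rho>0$, $0\le a<x$, and a function $\varphi$, the generalized (Katugampola) fractional integral is $${}^{\rho}\mathcal{I}^{\alpha,\beta}_{a+,\eta,\kappa}\varphi(x)=\frac{\rho^{1-\beta}x^{\kappa}}{\Gamma(\alpha)}\int_{a}^{x}\frac{\tau^{\rho(\eta+1)-1}}{(x^{\rho}-\tau^{\rho})^{1-\alpha}}\varphi(\tau)\,d\tau,$$ whenever the integral exists. ${}^{\rho}\mathcal{I}^{\alpha,\beta}_{a+,\eta,\kappa}(f^{1/p}g^{1/q})(x)$ means the operator applied to $\tau\mapsto f(\tau)^{1/p}g(\tau)^{1/q}$, evaluated at $x$. *)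

From HB Require Import structures.
From mathcomp Require Import all_boot all_order all_algebra.
From mathcomp Require Import all_classical all_reals all_analysis.
Set Implicit Arguments. Unset Strict Implicit. Unset Printing Implicit Defensive.
Import Order.TTheory GRing.Theory Num.Theory.
Local Open Scope classical_set_scope.
Local Open Scope ring_scope.

Definition Gamma_fun (R : realType) (a : R) : R :=
  Rintegral (@lebesgue_measure R) `]0, +oo[%classic
    (fun t => t `^ (a - 1) * expR (- t)).

Definition Xpc (R : realType) (p c a b : R) (f : R -> R) : Prop :=
  measurable_fun `]a, b[%classic f /\
  (\int[@lebesgue_measure R]_(t in `]a, b[%classic)
      ((`|t `^ c * f t| `^ p) / t)%:E < +oo)%E.

Definition katugampola (R : realType) (rho alpha beta eta kappa a : R)
    (phi : R -> R) (x : R) : \bar R :=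
  ((rho `^ (1 - beta) * x `^ kappa / Gamma_fun alpha)%:E *
   \int[@lebesgue_measure R]_(tau in `]a, x[%classic)
     ((tau `^ (rho * (eta + 1) - 1) / (x `^ rho - tau `^ rho) `^ (1 - alpha))
        * phi tau)%:E)%E.

From mathcomp Require Import all_boot all_order all_algebra.
From mathcomp Require Import all_classical all_reals all_analysis.
From mathcomp Require Import measurable_realfun.
Import Order.TTheory GRing.Theory Num.Theory.
Local Open Scope classical_set_scope.
Local Open Scope ring_scope.

(* With r = 1/p and s = 1 - r, the bounds m <= f/g <= M give pointwise
   M^-s f <= f^r g^s and m^r g <= f^r g^s.  The Katugampola integral K is
   monotone and positively homogeneous, so M^-s K f <= K h and m^r K g <= K h
   for h = f^r g^s; raising these to the powers r and s and multiplying gives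
   (K f)^r (K g)^s <= (M^s)^r (m^-r)^s K h = (M/m)^(rs) K h, as r + s = 1. *)

Lemma powRV (R : realType) (y s : R) : 0 <= y -> (y^-1) `^ s = (y `^ s)^-1.
Proof. by move=> y0; rewrite -powR_inv1 // -powRrM mulN1r powRN. Qed.

Section ConjugateExponents.
Variables (R : realType) (r s : R).
Hypotheses (r_ge0 : 0 <= r) (s_ge0 : 0 <= s) (rs1 : r + s = 1).

Lemma powR_conj_split {y : R} : 0 <= y -> y `^ r * y `^ s = y.
Proof. by move=> y0; rewrite -powRD ?rs1 ?powRr1 ?oner_eq0. Qed.

Lemma powR_conj_ge_upper (M u v : R) : 0 < M -> 0 <= u -> 0 <= v ->
  u <= M * v -> (M `^ s)^-1 * u <= u `^ r * v `^ s.
Proof.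
move=> M0 u0 v0 uMv; rewrite ler_pdivrMl ?powR_gt0 //.
rewrite -{1}(powR_conj_split u0) mulrCA ler_wpM2l ?powR_ge0 // -powRM ?(ltW M0) //.
by apply: (ge0_ler_powR s_ge0); rewrite ?nnegrE ?mulr_ge0 ?(ltW M0).
Qed.

Lemma powR_conj_ge_lower (m u v : R) : 0 <= m -> 0 <= v ->
  m * v <= u -> m `^ r * v <= u `^ r * v `^ s.
Proof.
move=> m0 v0 mvu; rewrite -{1}(powR_conj_split v0) mulrA ler_wpM2r ?powR_ge0 //.
rewrite -powRM //; apply: (ge0_ler_powR r_ge0); rewrite ?nnegrE ?mulr_ge0 //.
exact: le_trans (mulr_ge0 m0 v0) mvu.
Qed.

Lemma powR_conj_le_ratio (m M A B h : R) : 0 < m -> 0 < M ->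
  0 <= A -> 0 <= B -> 0 <= h ->
  (M `^ s)^-1 * A <= h -> m `^ r * B <= h ->
  A `^ r * B `^ s <= (M / m) `^ (r * s) * h.
Proof.
move=> m0 M0 A0 B0 h0 hA hB.
have A1 : A `^ r <= M `^ (s * r) * h `^ r.
  rewrite powRrM -powRM ?powR_ge0 //; apply: ge0_ler_powR; rewrite ?nnegrE //.
    by rewrite mulr_ge0 ?powR_ge0.
  by rewrite -ler_pdivrMl ?powR_gt0.
have B1 : B `^ s <= (m `^ (r * s))^-1 * h `^ s.
  rewrite powRrM -powRV ?powR_ge0 // -powRM ?invr_ge0 ?powR_ge0 //.
  apply: ge0_ler_powR; rewrite ?nnegrE //.
    by rewrite mulr_ge0 ?invr_ge0 ?powR_ge0.
  by rewrite ler_pdivlMl ?invr_gt0 ?powR_gt0 ?invrK.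
have -> : (M / m) `^ (r * s) * h =
    (M `^ (s * r) * h `^ r) * ((m `^ (r * s))^-1 * h `^ s).
  rewrite mulrACA powR_conj_split // powRM ?invr_ge0 ?ltW //.
  by rewrite powRV ?ltW // [s * r]mulrC.
by apply: ler_pM; rewrite ?powR_ge0.
Qed.

Lemma powR_conj_le_ratio_bar (m M A B : R) (H : \bar R) : 0 < m -> 0 < M ->
  0 <= A -> 0 <= B -> (0 <= H)%E ->
  (((M `^ s)^-1 * A)%:E <= H)%E -> ((m `^ r * B)%:E <= H)%E ->
  ((A `^ r * B `^ s)%:E <= ((M / m) `^ (r * s))%:E * H)%E.
Proof.
move=> m0 M0 A0 B0; case: H => [h | _ _ _ | //].
- by rewrite !lee_fin; exact: powR_conj_le_ratio.
- by rewrite gt0_muley ?leey // lte_fin powR_gt0 // divr_gt0.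
Qed.

End ConjugateExponents.

Lemma Gamma_fun_ge0 (R : realType) (alpha : R) : 0 <= Gamma_fun alpha.
Proof.
by apply: Rintegral_ge0 => // t _; rewrite mulr_ge0 ?powR_ge0 ?expR_ge0.
Qed.

Lemma measurable_katugampola_kernel (R : realType) (x c1 c2 rho : R) :
  measurable_fun [set: R]
    (fun tau : R => tau `^ c1 / (x `^ rho - tau `^ rho) `^ c2).
Proof.
have -> : (fun tau : R => tau `^ c1 / (x `^ rho - tau `^ rho) `^ c2) =
    (fun tau => tau `^ c1 * ((x `^ rho - tau `^ rho) `^ c2) `^ (-1)).
  by apply/funext => t; rewrite powR_inv1 // powR_ge0.
apply: measurable_funM; first exact: measurable_powR.
do 2 apply: (measurableT_comp (measurable_powR _)).
by apply: measurable_funB; [exact: measurable_cst | exact: measurable_powR].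
Qed.

Section KatugampolaIntegral.
Variables (R : realType) (rho alpha beta eta kappa a x : R).

Local Notation K := (katugampola rho alpha beta eta kappa a).
Local Notation kernel tau :=
  (tau `^ (rho * (eta + 1) - 1) / (x `^ rho - tau `^ rho) `^ (1 - alpha)).

Lemma katugampola_ge0 {u : R -> R} :
  (forall t, a < t < x -> 0 <= u t) -> (0 <= K u x)%E.
Proof.
move=> u0; rewrite mule_ge0 ?lee_fin ?divr_ge0 ?mulr_ge0 ?powR_ge0 ?Gamma_fun_ge0 //.
apply: integral_ge0 => t; rewrite /= in_itv /= => /u0 ut0.
by rewrite lee_fin mulr_ge0 ?divr_ge0 ?powR_ge0.
Qed.

Lemma katugampola_le_scale (k : R) (u v : R -> R) : 0 <= k ->
  measurable_fun `]a, x[ u -> measurable_fun `]a, x[ v ->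
  (forall t, a < t < x -> 0 <= u t) ->
  (forall t, a < t < x -> k * u t <= v t) ->
  (k%:E * K u x <= K v x)%E.
Proof.
move=> k0 mu mv u0 kuv; rewrite muleCA; apply: lee_wpmul2l.
  by rewrite lee_fin ?divr_ge0 ?mulr_ge0 ?powR_ge0 ?Gamma_fun_ge0.
have mkernel : measurable_fun `]a, x[ (fun tau => kernel tau).
  by apply: measurable_funTS; exact: measurable_katugampola_kernel.
have mku := measurable_funM mkernel mu; have mkv := measurable_funM mkernel mv.
have ku0 t : `]a, x[%classic t -> (0 <= (kernel t * u t)%:E)%E.
  by rewrite /= in_itv /= => /u0 ut0; rewrite lee_fin mulr_ge0 ?divr_ge0 ?powR_ge0.
rewrite -ge0_integralZl_EFin //; last exact/measurable_EFinP.
apply: ge0_le_integral => //.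
- by move=> t /ku0; apply: mule_ge0; rewrite lee_fin.
- by apply/measurable_EFinP; apply: measurable_funM => //; exact: measurable_cst.
- exact/measurable_EFinP.
move=> t; rewrite /= in_itv /= => /kuv kut; rewrite lee_fin mulrCA.
by rewrite ler_wpM2l ?divr_ge0 ?powR_ge0.
Qed.

Lemma katugampola_reverse_holder (r s m M : R) (u v : R -> R) :
  0 <= r -> 0 <= s -> r + s = 1 -> 0 < m -> 0 < M ->
  measurable_fun `]a, x[ u -> measurable_fun `]a, x[ v ->
  (forall t, a < t < x -> [/\ 0 <= v t, m * v t <= u t & u t <= M * v t]) ->
  (K u x < +oo)%E -> (K v x < +oo)%E ->
  (((fine (K u x)) `^ r * (fine (K v x)) `^ s)%:E
    <= ((M / m) `^ (r * s))%:E * K (fun t => (u t `^ r * v t `^ s)%R) x)%E.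
Proof.
move=> r0 s0 rs1 m0 M0 mu mv uv Ku Kv.
set h := fun t => _.
have u0 t : a < t < x -> 0 <= u t.
  by move=> /uv[v0 mvu _]; exact: le_trans (mulr_ge0 (ltW m0) v0) mvu.
have v0 t : a < t < x -> 0 <= v t by case/uv.
have mh : measurable_fun `]a, x[ h.
  by apply: measurable_funM; apply: (measurableT_comp (measurable_powR _)).
have Kuh : (((M `^ s)^-1)%:E * K u x <= K h x)%E.
  apply: katugampola_le_scale => //; first by rewrite invr_ge0 powR_ge0.
  move=> t tD; have [v0t _ uMv] := uv t tD.
  by apply: powR_conj_ge_upper => //; exact: u0.
have Kvh : ((m `^ r)%:E * K v x <= K h x)%E.
  apply: katugampola_le_scale => //; first by rewrite powR_ge0.
  move=> t tD; have [v0t mvu _] := uv t tD.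
  by apply: powR_conj_ge_lower => //; exact: ltW.
have Kh0 : (0 <= K h x)%E.
  by apply: katugampola_ge0 => t _; rewrite mulr_ge0 ?powR_ge0.
have Ku0 := katugampola_ge0 u0; have Kv0 := katugampola_ge0 v0.
rewrite -(fineK (_ : K u x \is a fin_num)) ?ge0_fin_numE // in Kuh.
rewrite -(fineK (_ : K v x \is a fin_num)) ?ge0_fin_numE // in Kvh.
by apply: powR_conj_le_ratio_bar; rewrite ?fine_ge0.
Qed.

End KatugampolaIntegral.

Theorem theorem10 (R : realType) (alpha beta eta kappa rho p a x m M : R)
    (f g : R -> R) :
  0 < alpha -> 0 < rho -> 1 <= p -> 0 <= a -> a < x ->
  (forall t, 0 <= t -> 0 < f t) -> (forall t, 0 <= t -> 0 < g t) ->
  (exists c : R, Xpc p c a x f /\ Xpc p c a x g) ->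
  (katugampola rho alpha beta eta kappa a f x < +oo)%E ->
  (katugampola rho alpha beta eta kappa a g x < +oo)%E ->
  0 < m -> 0 < M ->
  (forall t, a <= t <= x -> m <= f t / g t <= M) ->
  (((fine (katugampola rho alpha beta eta kappa a f x)) `^ (1 / p) *
   (fine (katugampola rho alpha beta eta kappa a g x)) `^ (1 - 1 / p))%:E
  <= ((M / m) `^ (1 / p * (1 - 1 / p)))%:E *
     katugampola rho alpha beta eta kappa a
       (fun t => (f t `^ (1 / p) * g t `^ (1 - 1 / p))%R) x)%E.
Proof.
move=> _ _ p1 a0 _ fpos gpos [c [[mf _] [mg _]]] Kf Kg m0 M0 fg.
have p0 : 0 < p := lt_le_trans ltr01 p1.
apply: katugampola_reverse_holder => //.
- by rewrite divr_ge0 ?ltW.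
- by rewrite subr_ge0 ler_pdivrMr ?mul1r.
- by rewrite addrC subrK.
move=> t /andP[ta tx]; have t0 : 0 <= t by rewrite ltW // (le_lt_trans a0).
have [ft gt] := (fpos t t0, gpos t t0).
have /andP[] : m <= f t / g t <= M by apply: fg; rewrite !ltW.
by rewrite ler_pdivlMr // ler_pdivrMr // => -> ->; rewrite ltW.
Qed.
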